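(* Let $K$ be a compact Hausdorff space containing a nontrivial convergent sequence (a sequence $(x_n)$ converging to a point $x\notin\{x_n:n\in\mathbb{N}\}$). Then $C(K)$ fails the ball fixed point property. In particular, $C(K)$ fails the ball fixed point property for every infinite metrizable compact space $K$.
   Context: $C(K)$ is the real Banach space of continuous functions $K\to\mathbb{R}$ with the sup norm. A real Banach space $X$ has the ball fixed point property (BFPP) if every nonexpansive map $T\colon B_X\to B_X$ (i.e. $\|Tx-Ty\|\le\|x-y\|$) has a fixed point, where $B_X$ is the closed unit ball. *)

From HB Require Import structures.
From mathcomp Require Import all_boot all_order all_algebra.
From mathcomp Require Import all_classical all_reals all_analysis.
Unset Printing Implicit Defensive.
Import Order.TTheory GRing.Theory Num.Theory numFieldNormedType.Exports.
Local Open Scope classical_set_scope.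
Local Open Scope ring_scope.

Definition supnorm (R : realType) (K : topologicalType) (f : K -> R) : R :=
  sup (range (fun x => `|f x|)).

Definition CK_ball (R : realType) (K : topologicalType) : set (K -> R) :=
  [set f : K -> R | continuous f /\ supnorm R K f <= 1].

Definition CK_BFPP (R : realType) (K : topologicalType) : Prop :=
  forall T : (K -> R) -> (K -> R),
    (forall f, CK_ball R K f -> CK_ball R K (T f)) ->
    (forall f g, CK_ball R K f -> CK_ball R K g ->
       supnorm R K (T f - T g) <= supnorm R K (f - g)) ->
    exists2 f, CK_ball R K f & T f = f.

Definition has_nontrivial_cvg_seq (K : topologicalType) : Prop :=
  exists (u : nat -> K) (x : K), u @ \oo --> x /\ (forall n, u n <> x).

From HB Require Import structures.
From mathcomp Require Import all_boot all_order all_algebra.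
From mathcomp Require Import all_classical all_reals all_analysis.
From mathcomp Require Import ring lra.
Unset Printing Implicit Defensive.
Import Order.TTheory GRing.Theory Num.Theory numFieldNormedType.Exports.
Local Open Scope classical_set_scope.
Local Open Scope ring_scope.

(* The map a |-> (1, -a_0, -a_1, ...) is a nonexpansive self-map of the unit
   ball of the space c of convergent sequences without fixed point: a fixed
   point would alternate between 1 and -1.  To transplant it to C(K), take a
   continuous h vanishing at the limit x and positive along the sequence (a
   series of Urysohn functions), and pass to a subsequence v_k on which the
   levels tau_k = h(v_k) at least halve at each step.  Tents in h around the
   tau_k then have disjoint supports, and
     E(a, L) = L + sum_k tent_k(h) (a_k - L)
   is a linear operator of norm one from c to C(K) with E(a, L)(v_k) = a_k.
   Hence T f = E((1, -f(v_0), -f(v_1), ...), -f(x)) is a nonexpansive self-map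
   of the ball of C(K), and a fixed point f would make f(v_k) alternate
   between 1 and -1, against the continuity of f at x.  An infinite compact
   metric space has a non-isolated point, hence a nontrivial convergent
   sequence. *)

Section SupNorm.
Context {R : realType} {K : topologicalType}.

Lemma ler_supnorm {f : K -> R} : compact [set: K] -> continuous f ->
  forall y, `|f y| <= supnorm R K f.
Proof.
move=> cK cf y; apply: sup_upper_bound; last by exists y.
split; first by exists `|f y|, y.
have cnf : continuous (fun y => `|f y|).
  by move=> z; apply: continuous_comp; [exact: cf | exact: norm_continuous].
apply: bounded_fun_has_ubound.
have := compact_bounded (continuous_compact (continuous_subspaceT cnf) cK).
rewrite /bounded_near /= => B; apply: filterS B => M HM x _.
by apply: HM; exists x.
Qed.

Lemma supnorm_le {f : K -> R} {c : R} (y0 : K) :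
  (forall y, `|f y| <= c) -> supnorm R K f <= c.
Proof. by move=> fc; apply: ge_sup; [exists `|f y0|, y0 | move=> _ [y _ <-]]. Qed.

End SupNorm.

Section UniformlyCauchySeries.
Context {R : realType}.

Definition unif_cauchy_series {T : Type} (g : nat -> T -> R) :=
  forall e, 0 < e -> exists N, forall y m n, (N <= m)%N ->
    `|\sum_(m <= k < n) g k y| <= e.

Definition series_fun {T : Type} (g : nat -> T -> R) (y : T) : R :=
  limn (series (g^~ y)).

Lemma unif_cauchy_series_cvg {T : Type} {g : nat -> T -> R} :
  unif_cauchy_series g -> forall y, cvgn (series (g^~ y)).
Proof.
move=> gC y; apply/cauchy_cvgP/cauchy_seriesP => e e0.
have [N gN] := gC (e / 2) (divr_gt0 e0 (ltr0Sn _ 1)).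
exists ([set m | (N <= m)%N], setT); first by split => //; exists N.
move=> [m n] [/= Nm _]; apply: (le_lt_trans (gN y m n Nm)).
by rewrite ltr_pdivrMr// ltr_pMr// ltr1n.
Qed.

Lemma unif_cauchy_series_tail {T : Type} {g : nat -> T -> R} {e : R} {N} :
  unif_cauchy_series g ->
  (forall y m n, (N <= m)%N -> `|\sum_(m <= k < n) g k y| <= e) ->
  forall y, `|series_fun g y - \sum_(0 <= k < N) g k y| <= e.
Proof.
move=> gC gN y.
have tail_cvg : (fun n => `|series (g^~ y) n - \sum_(0 <= k < N) g k y|) @ \oo -->
    `|series_fun g y - \sum_(0 <= k < N) g k y|.
  have cv := unif_cauchy_series_cvg gC y.
  by apply: cvg_norm; apply: cvgB => //; exact: cvg_cst.
apply: (cvgr_to_le tail_cvg); exists N => // n /= Nn.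
rewrite /series /= (@big_cat_nat _ _ _ N 0 n _ _ (leq0n N) Nn) /= addrC addrK.
exact: gN.
Qed.

Lemma unif_cauchy_series_continuous {T : topologicalType} {g : nat -> T -> R} :
  (forall k, continuous (g k)) -> unif_cauchy_series g ->
  continuous (series_fun g).
Proof.
move=> gc gC y0; apply/cvgrPdist_le => e e0.
have e30 : 0 < e / 3 by rewrite divr_gt0.
have [N gN] := gC (e / 3) e30.
pose P y := \sum_(0 <= k < N) g k y.
have Pc : continuous P.
  by apply: (continuous_big add_continuous) => k _; exact: gc.
have /cvgrPdist_le/(_ _ e30) := Pc y0.
apply: filterS => y Py /=.
have -> : series_fun g y0 - series_fun g y =
    (series_fun g y0 - P y0) + (P y0 - P y) - (series_fun g y - P y) by ring.
rewrite (le_trans (ler_normB _ _))// (le_trans (lerD (ler_normD _ _) (lexx _)))//.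
have -> : e = e / 3 + e / 3 + e / 3 by field.
by rewrite !lerD // (unif_cauchy_series_tail gC gN).
Qed.

Lemma unif_cauchy_series_dominated {T : Type} {g : nat -> T -> R} {M : nat -> R} :
  (forall k y, `|g k y| <= M k) -> cvgn (series M) -> unif_cauchy_series g.
Proof.
move=> gM /cvg_cauchy/cauchy_seriesP MC e e0.
have [[A B] /= [[N1 _ AN1] [N2 _ BN2]] MAB] := MC e e0.
exists (maxn N1 N2) => y m n; rewrite geq_max => /andP[mN1 mN2].
have [nm|mn] := ltnP n m; first by rewrite big_geq ?normr0 ?ltW// ltnW.
rewrite (le_trans (ler_norm_sum _ _ _))// (le_trans (ler_sum _ (fun k _ => gM k y)))//.
apply: ltW; apply: le_lt_trans (ler_norm _) (MAB (m, n) _); split => /=.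
  exact: AN1.
by apply: BN2; exact: leq_trans mN2 mn.
Qed.

End UniformlyCauchySeries.

Lemma exists_sep_point_seq (R : realType) {K : topologicalType} {u : nat -> K} {x : K} :
  compact [set: K] -> hausdorff_space K -> (forall n, u n <> x) ->
  exists h : K -> R, [/\ continuous h, h x = 0 & forall n, 0 < h (u n)].
Proof.
move=> cK hK ux.
have closed1 := accessible_closed_set1 (hausdorff_accessible hK).
have sep n : uniform_separator [set x] [set u n].
  apply: (normal_separatorP.1 (compact_normal hK cK)) => //.
  by apply/seteqP; split => // y [/= -> /esym/ux].
pose U n := Urysohn (R:=R) [set x] [set u n].
have U01 n y : 0 <= U n y <= 1.
  by have := @Urysohn_range K R _ _ (U n y) (ex_intro2 _ _ y I erefl); rewrite /= in_itv.
have Ux n : U n x = 0 by apply: (Urysohn_sub0 (sep n)); exists x.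
have Uu n : U n (u n) = 1 by apply: (Urysohn_sub1 (sep n)); exists (u n).
pose g k y := geometric (2^-1) (2^-1) k * U k y.
have g0 k y : 0 <= g k y.
  by rewrite mulr_ge0 ?geometric_ge0 ?invr_ge0//; case/andP: (U01 k y).
have gM k y : `|g k y| <= geometric (2^-1) (2^-1) k.
  rewrite ger0_norm // ler_piMr ?geometric_ge0 ?invr_ge0//.
  by case/andP: (U01 k y).
have half : `|2^-1 : R| < 1 by rewrite gtr0_norm ?invr_gt0// invf_lt1// ltr1n.
have gC := unif_cauchy_series_dominated gM (@is_cvg_geometric_series _ (2^-1) _ half).
exists (series_fun g); split.
- apply: (unif_cauchy_series_continuous _ gC) => k y.
  by apply: cvgMl_tmp; exact: Urysohn_continuous.
- rewrite /series_fun (_ : series _ = fun=> 0) ?lim_cst//.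
  by apply/funext => n; rewrite /series /= big1// => k _; rewrite /g Ux mulr0.
- move=> n.
  have nd : nondecreasing_seq (series (g^~ (u n))).
    by apply/nondecreasing_seqP => m; rewrite /series /= big_nat_recr//= lerDl.
  apply: lt_le_trans (nondecreasing_cvgn_le nd (unif_cauchy_series_cvg gC _) n.+1).
  rewrite /series /= big_nat_recr//= /g Uu mulr1 ltr_wpDl ?sumr_ge0// => [k _|].
    exact: g0.
  by rewrite /geometric /= mulr_gt0 ?exprn_gt0 ?invr_gt0.
Qed.

Lemma fast_decreasing_subseq {R : realType} {t : nat -> R} :
  (forall n, 0 < t n) -> t @ \oo --> 0 ->
  exists phi : nat -> nat, (forall k, (phi k < phi k.+1)%N) /\
    (forall k, t (phi k.+1) <= t (phi k) / 2).
Proof.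
move=> t_gt0 t0.
have next n : exists m, (n < m)%N /\ t m <= t n / 2.
  have /cvgrPdist_le/(_ (t n / 2)) := t0.
  case=> [|N _ tN]; first by rewrite divr_gt0.
  exists (maxn N n.+1); split; first by rewrite leq_max ltnSn orbT.
  by have := tN _ (leq_maxl N n.+1); rewrite sub0r normrN ger0_norm// ltW.
pose nx n := proj1_sig (cid (next n)).
have nxP n : (n < nx n)%N /\ t (nx n) <= t n / 2 by rewrite /nx; case: cid.
exists (fun k => iter k nx 0%N).
by split => k; rewrite iterS; [exact: (nxP _).1 | exact: (nxP _).2].
Qed.

Lemma subseq_cvg {K : topologicalType} {u : nat -> K} {x : K} {phi : nat -> nat} :
  (forall k, (phi k < phi k.+1)%N) -> u @ \oo --> x -> (fun k => u (phi k)) @ \oo --> x.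
Proof.
move=> phi_incr ux.
have phi_ge k : (k <= phi k)%N.
  by elim: k => // k IH; exact: leq_ltn_trans IH (phi_incr k).
move=> A /ux [N _ uN]; exists N => // k /= Nk; apply: uN.
exact: leq_trans Nk (phi_ge k).
Qed.

Section Tent.
Context {R : realType}.

Definition tent (c t : R) : R := Num.max 0 (1 - 4 * `|t / c - 1|).

Lemma tent_ge0 c t : 0 <= tent c t.
Proof. by rewrite /tent le_max lexx. Qed.

Lemma tent_le1 c t : tent c t <= 1.
Proof. by rewrite /tent ge_max ler01 /= lerBlDr lerDl mulr_ge0. Qed.

Lemma tent_id c : 0 < c -> tent c c = 1.
Proof.
by move=> c0; rewrite /tent divff ?gt_eqF// subrr normr0 mulr0 subr0 max_r ?ler01.
Qed.

Lemma tent_neq0 c t : 0 < c -> tent c t != 0 -> 3 / 4 * c < t < 5 / 4 * c.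
Proof.
move=> c0 tn0; have [le0|] := leP (1 - 4 * `|t / c - 1|) 0.
  by rewrite /tent max_l ?eqxx in tn0.
rewrite subr_gt0 -ltr_pdivlMl// mulr1 ltr_norml => /andP[t_gt t_lt].
have -> : t = (t / c) * c by rewrite mulfVK ?gt_eqF.
by rewrite !ltr_pM2r//; apply/andP; split; lra.
Qed.

Lemma continuous_tent {T : topologicalType} (c : R) (h : T -> R) :
  continuous h -> continuous (fun y => tent c (h y)).
Proof.
move=> hc y; apply: (@continuous_max R T (fun _ => 0 : R^o)
  (fun y => 1 - 4 * `|h y / c - 1| : R^o)); first exact: cvg_cst.
apply: cvgB; first exact: cvg_cst.
apply: cvgMl_tmp; apply: cvg_norm; apply: cvgB; last exact: cvg_cst.
by apply: cvgMr_tmp; exact: hc.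
Qed.

Variable tau : nat -> R.
Hypotheses (tau_gt0 : forall k, 0 < tau k) (tau_half : forall k, tau k.+1 <= tau k / 2).

Lemma tau_le_half {j k : nat} : (j < k)%N -> tau k <= tau j / 2.
Proof.
elim: k => // k IH; rewrite ltnS leq_eqVlt => /orP[/eqP -> // | jk].
by apply: le_trans (tau_half k) _; have := IH jk; have := tau_gt0 k; lra.
Qed.

Lemma tent_tau j k : tent (tau k) (tau j) = (j == k)%:R.
Proof.
have [-> | jk] := eqVneq j k; first exact: tent_id.
apply/eqP; apply: contraT => /(tent_neq0 _ _ (tau_gt0 k)).
have [lt|gt|/eqP] := ltngtP j k; last by rewrite (negbTE jk).
- by have := tau_le_half lt; have := tau_gt0 k; lra.
- by have := tau_le_half gt; have := tau_gt0 k; lra.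
Qed.

Lemma tent_tau_single t : exists k0, forall k, k != k0 -> tent (tau k) t = 0.
Proof.
have [[k0 tk0] | none] := pselect (exists k0, tent (tau k0) t != 0); last first.
  exists 0%N => k _; apply/eqP; apply: contrapT => tk.
  by apply: none; exists k; exact/negP.
exists k0 => k kk0; apply/eqP; apply: contraNT kk0 => tk.
suff lt_tent j l : (j < l)%N -> tent (tau j) t != 0 -> tent (tau l) t != 0 -> False.
  by have [/lt_tent/(_ tk tk0) | /lt_tent/(_ tk0 tk) | ] := ltngtP k k0.
move=> jl /(tent_neq0 _ _ (tau_gt0 j)) /andP[tj _].
move=> /(tent_neq0 _ _ (tau_gt0 l)) /andP[_ tl].
by have := tau_le_half jl; have := tau_gt0 l; lra.
Qed.

End Tent.

Lemma sum_nat_single {V : zmodType} (F : nat -> V) k0 m n :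
  (forall k, k != k0 -> F k = 0) ->
  \sum_(m <= k < n) F k = if (m <= k0 < n)%N then F k0 else 0.
Proof. by move=> F0; rewrite -(big_nat1_eq +%R) big_rmcond. Qed.

Lemma lim_series_single {R : realType} (F : nat -> R) k0 :
  (forall k, k != k0 -> F k = 0) -> limn (series F) = F k0.
Proof.
move=> F0; apply: (lim_near_cst (@Rhausdorff R)); exists k0.+1 => // n /= k0n.
by rewrite /series /= (sum_nat_single _ k0) // k0n.
Qed.

Section NegShift.
Context {R : realType}.

Definition negshift (a : nat -> R) (k : nat) : R :=
  if k is k'.+1 then - a k' else 1.

Lemma cvg_negshift (a : nat -> R) (l : R) :
  a @ \oo --> l -> negshift a @ \oo --> - l.
Proof. by move=> al; rewrite -cvg_shiftS; exact: cvgN. Qed.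

Lemma negshift_fixpoint_not_cvg (a : nat -> R) (l : R) :
  negshift a =1 a -> ~ a @ \oo --> l.
Proof.
move=> fix_a /cvgrPdist_le /(_ 2^-1) [//|N _ aN].
have norm_a k : `|a k| = 1.
  by elim: k => [|k IH]; rewrite -fix_a /= ?normr1 ?normrN.
have := aN N (leqnn N); have := aN N.+1 (leqnSn N); rewrite -fix_a /=.
have /eqP := norm_a N; rewrite eqr_norml => /andP[/orP[] /eqP -> _].
all: by rewrite !ler_norml => /andP[? ?] /andP[? ?]; lra.
Qed.

End NegShift.

Section TentExtension.
Context {R : realType} {K : topologicalType}.
Variables (h : K -> R) (tau : nat -> R).
Hypotheses (tau_gt0 : forall k, 0 < tau k) (tau_half : forall k, tau k.+1 <= tau k / 2).

Definition tent_ext (a : nat -> R) (L : R) (y : K) : R :=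
  L + series_fun (fun k y => tent (tau k) (h y) * (a k - L)) y.

Lemma tent_extE y : exists k0, forall a L,
  tent_ext a L y = L + tent (tau k0) (h y) * (a k0 - L).
Proof.
have [k0 tk0] := tent_tau_single _ tau_gt0 tau_half (h y).
exists k0 => a L; rewrite /tent_ext /series_fun (lim_series_single _ k0) //.
by move=> k /tk0 ->; rewrite mul0r.
Qed.

Lemma tent_ext_tau a L y j : h y = tau j -> tent_ext a L y = a j.
Proof.
move=> hy; rewrite /tent_ext /series_fun (lim_series_single _ j) => [|k kj].
  by rewrite hy (tent_tau _ tau_gt0 tau_half) eqxx mul1r addrC subrK.
by rewrite hy (tent_tau _ tau_gt0 tau_half) eq_sym (negbTE kj) mul0r.
Qed.

Lemma tent_extB a b L M y :
  tent_ext a L y - tent_ext b M y = tent_ext (fun k => a k - b k) (L - M) y.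
Proof. by have [k0 ext_k0] := tent_extE y; rewrite !ext_k0; ring. Qed.

Lemma tent_ext_le a L D y :
  (forall k, `|a k| <= D) -> `|L| <= D -> `|tent_ext a L y| <= D.
Proof.
have [k0 ->] := tent_extE y; move/(_ k0); set w := tent _ _.
have w0 : 0 <= w := tent_ge0 _ _; have w1 : w <= 1 := tent_le1 _ _.
rewrite !ler_norml => /andP[a1 a2] /andP[L1 L2]; apply/andP; split; nra.
Qed.

Lemma continuous_tent_ext a L : continuous h -> a @ \oo --> L ->
  continuous (tent_ext a L).
Proof.
move=> hc aL y; apply: cvgD; first exact: cvg_cst.
move: y; apply: unif_cauchy_series_continuous => [k y | e e0].
  by apply: cvgMr_tmp; exact: continuous_tent.
have [N _ aN] := (cvgrPdist_le _ _).1 aL e e0.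
exists N => y m n Nm; have [k0 tk0] := tent_tau_single _ tau_gt0 tau_half (h y).
rewrite (sum_nat_single _ k0) => [|k /tk0 ->]; last by rewrite mul0r.
case: ifP => [/andP[mk0 _] | _]; last by rewrite normr0 ltW.
rewrite normrM ger0_norm ?tent_ge0// distrC -[e]mul1r ler_pM ?tent_ge0 ?tent_le1//.
exact/aN/(leq_trans Nm mk0).
Qed.

Lemma not_CK_BFPP_of_tent_seq (v : nat -> K) (x : K) :
  compact [set: K] -> continuous h -> v @ \oo --> x ->
  (forall k, h (v k) = tau k) -> ~ CK_BFPP R K.
Proof.
move=> cK hc vx hv BFPP.
pose T f := tent_ext (negshift (f \o v)) (- f x).
have ball_le1 f : CK_ball R K f -> forall y, `|f y| <= 1.
  by move=> [cf f1] y; exact: le_trans (ler_supnorm cK cf y) f1.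
have T_ball f : CK_ball R K f -> CK_ball R K (T f).
  move=> Bf; have [cf _] := Bf; split.
    apply: (continuous_tent_ext _ _ hc).
    exact/cvg_negshift/(cvg_comp _ _ vx (cf x)).
  apply: (supnorm_le x) => y; apply: tent_ext_le.
    by case=> [|k] /=; rewrite ?normr1 ?normrN//; exact: ball_le1.
  by rewrite normrN; exact: ball_le1.
have T_nonexp f g : CK_ball R K f -> CK_ball R K g ->
    supnorm R K (T f - T g) <= supnorm R K (f - g).
  move=> [cf _] [cg _].
  have fgD y : `|f y - g y| <= supnorm R K (f - g).
    apply: (ler_supnorm (f := f - g) cK) => z.
    by apply: cvgB; [exact: cf | exact: cg].
  apply: (supnorm_le x) => y /=.
  rewrite (_ : (T f - T g) y = T f y - T g y) // tent_extB.
  apply: tent_ext_le.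
    case=> [|k] /=; last by rewrite -opprD normrN.
    by rewrite subrr normr0; exact: le_trans (normr_ge0 _) (fgD x).
  by rewrite -opprD normrN.
have [f [cf _] Tf] := BFPP T T_ball T_nonexp.
apply: (negshift_fixpoint_not_cvg (f \o v) (f x)).
  by move=> k; rewrite /= -[in RHS]Tf /T (tent_ext_tau _ _ _ _ (hv k)).
exact: (cvg_comp _ _ vx (cf x)).
Qed.

End TentExtension.

Lemma not_CK_BFPP_of_nontrivial_cvg_seq (R : realType) (K : topologicalType) :
  compact [set: K] -> hausdorff_space K -> has_nontrivial_cvg_seq K ->
  ~ CK_BFPP R K.
Proof.
move=> cK hK [u [x [ux u_neq]]].
have [h [hc hx hu]] := exists_sep_point_seq R cK hK u_neq.
have hu0 : (fun n => h (u n)) @ \oo --> 0 by rewrite -hx; exact: cvg_comp ux (hc x).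
have [phi [phi_incr phi_half]] := fast_decreasing_subseq hu hu0.
apply: (not_CK_BFPP_of_tent_seq h _ (fun k => hu _) phi_half _ x cK hc) => //.
exact: subseq_cvg phi_incr ux.
Qed.

(* [cover_compact] is only stated for pointed spaces. *)
Definition pointed_at {K : topologicalType} (x : K) : Type := K.
HB.instance Definition _ (K : topologicalType) (x : K) :=
  Topological.copy (pointed_at x) K.
HB.instance Definition _ (K : topologicalType) (x : K) :=
  isPointed.Build (pointed_at x) x.

Lemma infinite_compact_not_discrete {R : realType} {K : pseudoMetricType R} :
  compact [set: K] -> infinite_set [set: K] ->
  exists x : K, forall e : R, 0 < e -> exists y, y <> x /\ ball x e y.
Proof.
move=> cK iK; apply: contrapT => discrete.
have open1 (x : K) : open [set x].
  apply: contrapT => nopen; apply: discrete; exists x => e e0.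
  apply: contrapT => nball; apply: nopen.
  rewrite openE => _ /= ->; apply/nbhs_ballP; exists e => // y xy /=.
  by apply: contrapT => yx; apply: nball; exists y.
have [x0 _] := infinite_setN0 iK.
have : cover_compact [set: pointed_at x0] by rewrite -compact_cover.
move=> /(_ K setT (fun x => [set x]) (fun x _ => open1 x)) [y _|D _ cover].
  by exists y.
by apply/iK/(sub_finite_set _ (finite_fset D)) => y /cover [z /= zD ->].
Qed.

Lemma infinite_compact_nontrivial_cvg_seq (R : realType) (K : pseudoMetricType R) :
  compact [set: K] -> infinite_set [set: K] -> has_nontrivial_cvg_seq K.
Proof.
move=> cK iK; have [x x_acc] := infinite_compact_not_discrete cK iK.
have near_x n : exists y, y <> x /\ ball x n.+1%:R^-1 y.
  by apply: x_acc; rewrite invr_gt0.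
pose u n := proj1_sig (cid (near_x n)).
have uP n : u n <> x /\ ball x n.+1%:R^-1 (u n) by rewrite /u; case: cid.
exists u, x; split => [|n]; last exact: (uP n).1.
apply/cvg_ballP => e e0; have [k ke] := ltr_add_invr e0; rewrite add0r in ke.
exists k => // n /= kn; apply: le_ball (uP n).2; apply/ltW/(le_lt_trans _ ke).
by rewrite lef_pV2 ?posrE// ler_nat ltnS.
Qed.

Theorem mainTheorem3 (R : realType) :
  (forall K : topologicalType,
     compact [set: K] -> hausdorff_space K -> has_nontrivial_cvg_seq K ->
     ~ CK_BFPP R K)
  /\
  (forall K : pseudoMetricType R,
     hausdorff_space K -> compact [set: K] -> infinite_set [set: K] ->
     ~ CK_BFPP R K).
Proof.
split=> [K | K hK cK iK]; first exact: not_CK_BFPP_of_nontrivial_cvg_seq.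
apply: not_CK_BFPP_of_nontrivial_cvg_seq => //.
exact: infinite_compact_nontrivial_cvg_seq.
Qed.
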